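(* Let $(\mathcal{M},\mathrm{dist})$ be a metric space, $\mathcal{F}\subset2^{\mathcal{M}}$, and $J_\beta:\mathcal{M}\to\mathbb{R}\cup\{+\infty\}$, $0<\beta<+\infty$, lower semi-continuous functionals with $J_{\beta_1}\le J_{\beta_2}$ on $\mathcal{M}$ whenever $0<\beta_1\le\beta_2<+\infty$. Let $J_\infty=\sup_{\beta>0}J_\beta$ and $c_\beta=\inf_{A\in\mathcal{F}}\sup_AJ_\beta$ for $0<\beta\le+\infty$, and assume $c_\beta\in\mathbb{R}$ for all $0<\beta\le+\infty$. Assume (F2'): for every sequence $(A_n)\subset\mathcal{F}$ such that, for some $\beta$, $A_n\subset\mathcal{M}^{c_\infty+1}_\beta$ for all $n$, one has $\limsup_nA_n\in\mathcal{F}$. Then (1) for every $0<\beta<+\infty$ there is an optimal set for $J_\beta$ at $c_\beta$; (2) $c_\beta\to c_\infty$ as $\beta\to+\infty$; (3) if $\beta_n\to+\infty$ and $A_n\in\mathcal{F}$ is optimal for $J_{\beta_n}$ at $c_{\beta_n}$, then $\limsup_nA_n$ is optimal for $J_\infty$ at $c_\infty$.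
   Context: $\mathcal{M}^{c'}_\beta=\{x\in\mathcal{M}:J_\beta(x)\le c'\}$. A set $A$ is optimal for $J$ at $c$ if $A\in\mathcal{F}$ and $\sup_AJ=c$. For sets $A_n\subset\mathcal{M}$, $\limsup_nA_n$ is the set of $x$ such that for some $n_j\to\infty$ there are $x_{n_j}\in A_{n_j}$ with $x_{n_j}\to x$. *)

From HB Require Import structures.
From mathcomp Require Import all_boot all_order all_algebra.
From mathcomp Require Import all_classical all_reals all_analysis.
Set Implicit Arguments. Unset Strict Implicit. Unset Printing Implicit Defensive.
Import Order.TTheory GRing.Theory Num.Theory.
Local Open Scope classical_set_scope.
Local Open Scope ring_scope.
Local Open Scope ereal_scope.

Section defs.
Context {R : realType} {M : topologicalType}.

Definition supOn (J : M -> \bar R) (A : set M) : \bar R := ereal_sup (J @` A).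

Definition minimax (F : set (set M)) (J : M -> \bar R) : \bar R :=
  ereal_inf [set supOn J A | A in F].

Definition optimal (F : set (set M)) (J : M -> \bar R) (c : \bar R) (A : set M) :=
  F A /\ supOn J A = c.

Definition sublevel (J : M -> \bar R) (c' : \bar R) : set M := [set x | J x <= c'].

Definition Jsup (J : R -> M -> \bar R) (x : M) : \bar R :=
  ereal_sup [set J b x | b in [set b : R | (0 < b)%R]].

(* limsup_n A_n: points x such that for some n_j -> oo there are
   x_{n_j} in A_{n_j} with x_{n_j} -> x *)
Definition setlimsup (A : nat -> set M) : set M :=
  [set x | exists (phi : nat -> nat) (u : nat -> M),
     (forall N : nat, exists j0 : nat, forall j : nat, (j0 <= j)%N -> (N <= phi j)%N) /\
     (forall j, A (phi j) (u j)) /\ u @ \oo --> x].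
End defs.

From HB Require Import structures.
From mathcomp Require Import all_boot all_order all_algebra.
From mathcomp Require Import all_classical all_reals all_analysis.
Import Order.TTheory GRing.Theory Num.Theory.
Local Open Scope classical_set_scope.
Local Open Scope ring_scope.

(* Everything rests on one observation: if the sets A_n lie, up to errors
   tending to 0, in the sublevel set {J_b <= K} of a lower semi-continuous
   J_b, then so does limsup_n A_n.  For (1) apply it to near-optimal sets of
   a fixed J_b.  For (3) apply it with b fixed while beta_n -> +oo, using the
   monotonicity of beta |-> J_beta, then take the supremum over b; (F2')
   puts limsup_n A_n in F, so it is optimal for J_oo.  For (2), c_beta is
   nondecreasing and bounded by c_oo, and running the argument of (3) with
   K = sup_beta c_beta gives c_oo <= K. *)

Section sublevel_setlimsup.
Context {R : realType} {M : topologicalType}.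
Local Open Scope ereal_scope.

Lemma lsc_setlimsup_sublevel {f : M -> \bar R} {A : nat -> set M} {K : \bar R} :
  lower_semicontinuous f -> K \is a fin_num ->
  (forall e, (0 < e)%R -> exists N, forall n, (N <= n)%N ->
     A n `<=` sublevel f (K + e%:E)) ->
  setlimsup A `<=` sublevel f K.
Proof.
move=> flsc Kfin AK x [phi [u [phi_oo [Au u_x]]]]; rewrite /sublevel /=.
apply/lee_addgt0Pr => e e0; rewrite leNgt; apply/negP => Kex.
have [N AKe] := AK e e0; have [j0 phiN] := phi_oo N.
move: Kex; rewrite -(fineK Kfin) -EFinD => /flsc [V Vx fV].
have [j1 _ uV] := u_x _ Vx; pose j := maxn j0 j1.
have := fV (u j) (uV j (leq_maxr _ _)).
have := AKe _ (phiN j (leq_maxl _ _)) _ (Au j).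
by rewrite /sublevel /= -(fineK Kfin) -EFinD => /le_lt_trans/[apply]; rewrite ltxx.
Qed.

End sublevel_setlimsup.

Section supOn_minimax.
Context {R : realType} {M : topologicalType}.
Local Open Scope ereal_scope.

Lemma supOn_ub (J : M -> \bar R) {A : set M} {y : M} : A y -> J y <= supOn J A.
Proof. by move=> Ay; apply: ereal_sup_ubound; exists y. Qed.

Lemma supOn_le_sublevel (J : M -> \bar R) (A : set M) K :
  (supOn J A <= K) <-> A `<=` sublevel J K.
Proof.
split=> [JAK y Ay|AK]; first exact: le_trans (supOn_ub J Ay) JAK.
by apply: ge_ereal_sup => _ [y Ay <-]; apply: AK.
Qed.

Lemma minimax_le_supOn {F : set (set M)} (J : M -> \bar R) {A : set M} :
  F A -> minimax F J <= supOn J A.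
Proof. by move=> FA; apply: ereal_inf_lbound; exists A. Qed.

Lemma le_minimax (F : set (set M)) (J1 J2 : M -> \bar R) :
  (forall x, J1 x <= J2 x) -> minimax F J1 <= minimax F J2.
Proof.
move=> J12; apply: le_ereal_inf_tmp => _ [A FA <-].
apply: le_trans (minimax_le_supOn J1 FA) _.
by apply/supOn_le_sublevel => y Ay; apply: le_trans (J12 y) (supOn_ub J2 Ay).
Qed.

Lemma minimax_near_optimal {F : set (set M)} {J : M -> \bar R} :
  minimax F J \is a fin_num ->
  exists A : nat -> set M, forall n,
    F (A n) /\ supOn J (A n) <= minimax F J + (n.+1%:R^-1)%:E.
Proof.
move=> cfin.
suff /choice[A optA] : forall n : nat, exists A,
    F A /\ supOn J A <= minimax F J + (n.+1%:R^-1)%:E by exists A.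
move=> n.
have inv_gt0 : (0 < n.+1%:R^-1 :> R)%R by rewrite invr_gt0.
have [_ [A FA <-] /ltW JA] := lb_ereal_inf_adherent inv_gt0 cfin.
by exists A.
Qed.

Lemma Jsup_ge (J : R -> M -> \bar R) b x : (0 < b)%R -> J b x <= Jsup J x.
Proof. by move=> b0; apply: ereal_sup_ubound; exists b. Qed.

Lemma Jsup_le (J : R -> M -> \bar R) x K :
  (forall b, (0 < b)%R -> J b x <= K) -> Jsup J x <= K.
Proof. by move=> JK; apply: ge_ereal_sup => _ [b b0 <-]; apply: JK. Qed.

End supOn_minimax.

Lemma pos_seq_lbound_lt {R : realDomainType} (u : nat -> R) N :
  (forall n, 0 < u n) -> exists2 b, 0 < b & forall n, (n < N)%N -> b <= u n.
Proof.
move=> u_gt0; elim: N => [|N [b b_gt0 ub]]; first by exists 1.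
exists (Order.min b (u N)); first by rewrite lt_min b_gt0 u_gt0.
move=> n; rewrite ltnS leq_eqVlt => /predU1P[->|nN]; rewrite ge_min.
  by rewrite lexx orbT.
by rewrite ub.
Qed.

Lemma cvgry_pos_seq_lbound {R : realType} {u : nat -> R} :
  (forall n, 0 < u n) -> u @ \oo --> +oo ->
  exists2 b, 0 < b & forall n, b <= u n.
Proof.
move=> u_gt0 /cvgryPge /(_ 1) [N _ u_ge1].
have [b b_gt0 ub] := pos_seq_lbound_lt u N u_gt0.
exists (Order.min b 1); first by rewrite lt_min b_gt0 ltr01.
move=> n; rewrite ge_min; case: (ltnP n N) => [/ub -> //|/u_ge1 ->].
by rewrite orbT.
Qed.

Section minimax_limit.
Context {R : realType} {M : topologicalType}.
Variables (F : set (set M)) (J : R -> M -> \bar R).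
Hypothesis Jlsc : forall b, 0 < b -> lower_semicontinuous (J b).
Hypothesis Jmono : forall b1 b2 x, 0 < b1 -> b1 <= b2 -> (J b1 x <= J b2 x)%E.
Hypothesis cfin : forall b, 0 < b -> minimax F (J b) \is a fin_num.
Hypothesis cinf_fin : minimax F (Jsup J) \is a fin_num.
Hypothesis F2' : forall A : nat -> set M, (forall n, F (A n)) ->
  (exists b, 0 < b /\ forall n, A n `<=` sublevel (J b) (minimax F (Jsup J) + 1)%E) ->
  F (setlimsup A).

Local Notation c b := (minimax F (J b)).
Local Notation cinf := (minimax F (Jsup J)).
Local Open Scope ereal_scope.

Lemma minimax_le_Jsup b : (0 < b)%R -> c b <= cinf.
Proof. by move=> b0; apply: le_minimax => x; apply: Jsup_ge. Qed.

Lemma minimax_nondecreasing b1 b2 : (0 < b1)%R -> (b1 <= b2)%R -> c b1 <= c b2.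
Proof. by move=> b10 b12; apply: le_minimax => x; apply: Jmono. Qed.

Lemma sublevel_Jmono {b1 b2 : R} (K : \bar R) : (0 < b1)%R -> (b1 <= b2)%R ->
  sublevel (J b2) K `<=` sublevel (J b1) K.
Proof. by move=> b10 b12 x; rewrite /sublevel /=; apply: le_trans; apply: Jmono. Qed.

Lemma setlimsup_mem {bs : nat -> R} {A : nat -> set M} :
  (exists2 b, 0 < b & forall n, b <= bs n)%R -> (forall n, F (A n)) ->
  (forall n, supOn (J (bs n)) (A n) <= cinf + 1) -> F (setlimsup A).
Proof.
move=> [b b0 b_le] FA Abs; apply: F2' => //; exists b; split=> // n.
by apply: subset_trans _ (sublevel_Jmono _ b0 (b_le n)); apply/supOn_le_sublevel.
Qed.

Lemma exists_optimal {b : R} : (0 < b)%R -> exists A, optimal F (J b) (c b) A.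
Proof.
move=> b0; have [A optA] := minimax_near_optimal (cfin _ b0).
have FL : F (setlimsup A).
  apply: (@setlimsup_mem (fun=> b)) => [|n|n]; [by exists b|exact: (optA n).1|].
  apply: le_trans (optA n).2 _; apply: leeD; first exact: minimax_le_Jsup.
  by rewrite lee_fin invf_le1 // ler1n.
exists (setlimsup A); split => //; apply/le_anti; rewrite minimax_le_supOn // andbT.
apply/supOn_le_sublevel; apply: lsc_setlimsup_sublevel (Jlsc _ b0) (cfin _ b0) _ => e e0.
have [N _ Ne] := near_infty_natSinv_lt (PosNum e0).
exists N => n Nn; apply/supOn_le_sublevel; apply: le_trans (optA n).2 _.
by apply: leeD => //; rewrite lee_fin ltW //; apply: Ne.
Qed.

Lemma setlimsup_Jsup_le {bs : nat -> R} {A : nat -> set M} {K : \bar R} :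
  (forall n, 0 < bs n)%R -> bs @ \oo --> +oo%R -> (forall n, F (A n)) ->
  K \is a fin_num -> K <= cinf -> (forall n, supOn (J (bs n)) (A n) <= K) ->
  F (setlimsup A) /\ supOn (Jsup J) (setlimsup A) <= K.
Proof.
move=> bs_gt0 bs_oo FA Kfin Kc AK; split.
  apply: (setlimsup_mem (cvgry_pos_seq_lbound bs_gt0 bs_oo) FA) => n.
  by apply: le_trans (AK n) (le_trans Kc _); apply: leeDl; exact: lee01.
apply/supOn_le_sublevel => x Lx; apply: Jsup_le => b b0.
suff : setlimsup A `<=` sublevel (J b) K by apply.
apply: lsc_setlimsup_sublevel (Jlsc _ b0) Kfin _ => e e0.
have /cvgryPge/(_ b)[N _ bs_ge] := bs_oo.
exists N => n /bs_ge bn; apply: subset_trans _ (sublevel_Jmono _ b0 bn).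
by apply/supOn_le_sublevel; apply: le_trans (AK n) _; rewrite leeDl // lee_fin ltW.
Qed.

Lemma setlimsup_optimal (bs : nat -> R) (A : nat -> set M) :
  (forall n, 0 < bs n)%R -> bs @ \oo --> +oo%R ->
  (forall n, optimal F (J (bs n)) (c (bs n)) (A n)) ->
  optimal F (Jsup J) cinf (setlimsup A).
Proof.
move=> bs_gt0 bs_oo optA.
have [FL LJ] := setlimsup_Jsup_le bs_gt0 bs_oo (fun n => (optA n).1) cinf_fin
  (lexx _) (fun n => ltac:(rewrite (optA n).2; exact: minimax_le_Jsup)).
by split=> //; apply/le_anti; rewrite LJ minimax_le_supOn.
Qed.

Lemma minimax_cvg : (fun b => c b) @ +oo%R --> cinf.
Proof.
pose g b := c (Num.max b 1%R).
have g_nondecr : {homo g : b1 b2 / (b1 <= b2)%R >-> b1 <= b2}.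
  move=> b1 b2 b12; apply: minimax_nondecreasing; first by rewrite lt_max ltr01 orbT.
  by rewrite ge_max !le_max b12 lexx /= !orbT.
have sup_g : ereal_sup (range g) = cinf.
  set s := ereal_sup _.
  have s_le : s <= cinf.
    by apply: ge_ereal_sup => _ [b _ <-]; apply: minimax_le_Jsup; rewrite lt_max ltr01 orbT.
  have g_le_s b : g b <= s by apply: ereal_sup_ubound; exists b.
  have s_ge : c 1%R <= s by have := g_le_s 1%R; rewrite /g maxxx.
  have sfin : s \is a fin_num.
    move: (cfin _ ltr01) cinf_fin; rewrite !fin_numElt => /andP[c1 _] /andP[_ cinf].
    by rewrite (lt_le_trans c1 s_ge) (le_lt_trans s_le cinf).
  apply/le_anti; rewrite s_le /=.
  pose bs n : R := n.+1%:R.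
  have bs_gt0 n : (0 < bs n)%R by rewrite ltr0Sn.
  have bs_oo : bs @ \oo --> +oo%R.
    apply/cvgryPge => b; have /cvgryPge/(_ b) := @cvgr_idn R.
    by apply: filterS => n /le_trans; apply; rewrite ler_nat.
  have [A optA] := choice (fun n => exists_optimal (bs_gt0 n)).
  have A_le_s n : supOn (J (bs n)) (A n) <= s.
    rewrite (optA n).2; apply: le_trans (g_le_s (bs n)).
    by apply: minimax_nondecreasing => //; rewrite le_max lexx.
  have [FL LJ] := setlimsup_Jsup_le bs_gt0 bs_oo (fun n => (optA n).1) sfin s_le A_le_s.
  exact: le_trans (minimax_le_supOn _ FL) LJ.
apply: cvg_trans (near_eq_cvg _) _; last by rewrite -sup_g; exact: nondecreasing_cvge.
by near=> b; rewrite /g max_l //; near: b; apply: nbhs_pinfty_ge.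
Unshelve. all: by end_near.
Qed.

End minimax_limit.

Theorem theorem2p7 (R : realType) (M : metricType R) (F : set (set M))
  (J : R -> M -> \bar R)
  (Jnoninf : forall b x, 0 < b -> J b x != -oo%E)
  (Jlsc : forall b, 0 < b -> lower_semicontinuous (J b))
  (Jmono : forall b1 b2 x, 0 < b1 -> b1 <= b2 -> (J b1 x <= J b2 x)%E)
  (cfin : forall b, 0 < b -> minimax F (J b) \is a fin_num)
  (cinffin : minimax F (Jsup J) \is a fin_num)
  (F2' : forall A : nat -> set M, (forall n, F (A n)) ->
     (exists b, 0 < b /\ forall n, A n `<=` sublevel (J b) (minimax F (Jsup J) + 1)%E) ->
     F (setlimsup A)) :
  (forall b, 0 < b -> exists A, optimal F (J b) (minimax F (J b)) A) /\
  ((fun b => minimax F (J b)) @ +oo --> minimax F (Jsup J)) /\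
  (forall (bs : nat -> R) (A : nat -> set M), (forall n, 0 < bs n) ->
     bs @ \oo --> +oo ->
     (forall n, optimal F (J (bs n)) (minimax F (J (bs n))) (A n)) ->
     optimal F (Jsup J) (minimax F (Jsup J)) (setlimsup A)).
Proof.
split; first exact: exists_optimal.
split; first exact: minimax_cvg.
exact: setlimsup_optimal.
Qed.
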